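(* Let $\mathcal{A}$ be a finite set of integers greater than $1$. Then there exist permutations $X\neq X'$ such that $C_aX=C_aX'$ for all $a\in\mathcal{A}$.
   Context: A finite dynamical system (FDS) is a function on a finite set, considered up to isomorphism of functional graphs; the product $AB$ acts on $S_A\times S_B$ by $(a,b)\mapsto(A(a),B(b))$. A permutation is a bijective FDS. $C_n$ denotes the FDS whose functional graph is a directed cycle of length $n$. *)

From mathcomp Require Import all_boot.
Unset Printing Implicit Defensive.

Record FDS := mkFDS { fds_carrier : finType; fds_map : fds_carrier -> fds_carrier }.

Definition fds_iso (X Y : FDS) : Prop :=
  exists h : fds_carrier X -> fds_carrier Y,
    bijective h /\ forall x, h (fds_map X x) = fds_map Y (h x).

Definition fds_prod (A B : FDS) : FDS :=
  @mkFDS (fds_carrier A * fds_carrier B)%type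
         (fun p => (fds_map A p.1, fds_map B p.2)).

Definition is_perm_fds (X : FDS) : Prop := bijective (fds_map X).

Definition cycleFDS (n : nat) : FDS := @mkFDS 'I_n (@ordS n).

(* In the semiring of FDS up to isomorphism, C_a C_a = C_a I_a, where I_a is
   the identity on a points (shear (i, j) |-> (j - i, j)); so C_a annihilates
   the formal difference I_a - C_a.  Expanding prod_(a in A) (I_a - C_a) into
   its even part X and odd part X' gives two permutations that every C_a with
   a in A identifies.  They differ because X has a fixed point (the all-I
   summand) while every summand of X' contains a fixed-point-free C_a. *)

From mathcomp Require Import all_boot all_algebra.
Import GRing.Theory.

Definition fds_sum (X Y : FDS) : FDS :=
  @mkFDS (fds_carrier X + fds_carrier Y)%type
    (fun s => match s with
              | inl x => inl (fds_map X x)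
              | inr y => inr (fds_map Y y)
              end).

Definition idFDS (n : nat) : FDS := @mkFDS 'I_n id.

Definition has_fixpoint (X : FDS) : Prop := exists x, fds_map X x = x.

Definition fixpoint_free (X : FDS) : Prop := forall x, fds_map X x != x.

Lemma can2_fds_iso (X Y : FDS) (h : fds_carrier X -> fds_carrier Y)
    (g : fds_carrier Y -> fds_carrier X) :
  cancel h g -> cancel g h -> (forall x, h (fds_map X x) = fds_map Y (h x)) ->
  fds_iso X Y.
Proof. by move=> hK gK hC; exists h; split=> //; exists g. Qed.

Lemma fds_iso_refl X : fds_iso X X.
Proof. exact: (@can2_fds_iso X X id id). Qed.

Lemma fds_iso_sym {X Y} : fds_iso X Y -> fds_iso Y X.
Proof.
case=> h [[g hK gK] hC]; apply: (@can2_fds_iso Y X g h) => // y.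
by apply: (can_inj hK); rewrite hC !gK.
Qed.

Lemma fds_iso_trans {X Y Z} : fds_iso X Y -> fds_iso Y Z -> fds_iso X Z.
Proof.
case=> h [[g hK gK] hC] [h' [[g' hK' gK'] hC']].
apply: (@can2_fds_iso X Z (h' \o h) (g \o g')) => x /=.
- by rewrite hK' hK.
- by rewrite gK gK'.
- by rewrite hC hC'.
Qed.

Lemma fds_iso_prod {X X' Y Y'} :
  fds_iso X X' -> fds_iso Y Y' -> fds_iso (fds_prod X Y) (fds_prod X' Y').
Proof.
case=> h [[g hK gK] hC] [h' [[g' hK' gK'] hC']].
apply: (@can2_fds_iso (fds_prod X Y) (fds_prod X' Y')
          (fun p => (h p.1, h' p.2)) (fun p => (g p.1, g' p.2))) => -[x y] /=.
- by rewrite hK hK'.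
- by rewrite gK gK'.
- by rewrite hC hC'.
Qed.

Lemma fds_iso_sum {X X' Y Y'} :
  fds_iso X X' -> fds_iso Y Y' -> fds_iso (fds_sum X Y) (fds_sum X' Y').
Proof.
case=> h [[g hK gK] hC] [h' [[g' hK' gK'] hC']].
apply: (@can2_fds_iso (fds_sum X Y) (fds_sum X' Y')
   (fun s => match s with inl x => inl (h x) | inr y => inr (h' y) end)
   (fun s => match s with inl x => inl (g x) | inr y => inr (g' y) end)).
- by case=> x /=; rewrite ?hK ?hK'.
- by case=> x /=; rewrite ?gK ?gK'.
- by case=> x /=; rewrite ?hC ?hC'.
Qed.

Lemma fds_sumC X Y : fds_iso (fds_sum X Y) (fds_sum Y X).
Proof.
pose swap T U (s : T + U) := match s with inl x => inr x | inr y => inl y end.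
by apply: (@can2_fds_iso (fds_sum X Y) (fds_sum Y X) (@swap _ _) (@swap _ _));
  case.
Qed.

Lemma fds_prodC X Y : fds_iso (fds_prod X Y) (fds_prod Y X).
Proof.
by apply: (@can2_fds_iso (fds_prod X Y) (fds_prod Y X)
             (fun p => (p.2, p.1)) (fun p => (p.2, p.1))); case.
Qed.

Lemma fds_prodA X Y Z :
  fds_iso (fds_prod X (fds_prod Y Z)) (fds_prod (fds_prod X Y) Z).
Proof.
by apply: (@can2_fds_iso (fds_prod X (fds_prod Y Z)) (fds_prod (fds_prod X Y) Z)
   (fun p => ((p.1, p.2.1), p.2.2)) (fun p => (p.1.1, (p.1.2, p.2))))
   => [[? []] | [[]] | [? []]].
Qed.

Lemma fds_prodCA X Y Z :
  fds_iso (fds_prod X (fds_prod Y Z)) (fds_prod Y (fds_prod X Z)).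
Proof.
apply: fds_iso_trans (fds_prodA _ _ _) _.
apply: fds_iso_trans (fds_iso_sym (fds_prodA _ _ _)).
exact: fds_iso_prod (fds_prodC _ _) (fds_iso_refl _).
Qed.

Lemma fds_prodDr X Y Z :
  fds_iso (fds_prod X (fds_sum Y Z)) (fds_sum (fds_prod X Y) (fds_prod X Z)).
Proof.
apply: (@can2_fds_iso (fds_prod X (fds_sum Y Z))
          (fds_sum (fds_prod X Y) (fds_prod X Z))
   (fun p => match p.2 with inl y => inl (p.1, y) | inr z => inr (p.1, z) end)
   (fun s => match s with inl p => (p.1, inl p.2) | inr p => (p.1, inr p.2) end)).
- by case=> x [].
- by case=> [[]|[]].
- by case=> x [].
Qed.

Lemma perm_fds_prod X Y :
  is_perm_fds X -> is_perm_fds Y -> is_perm_fds (fds_prod X Y).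
Proof.
case=> g hK gK [g' hK' gK'].
by exists (fun p => (g p.1, g' p.2)) => -[x y] /=; rewrite ?hK ?hK' ?gK ?gK'.
Qed.

Lemma perm_fds_sum X Y :
  is_perm_fds X -> is_perm_fds Y -> is_perm_fds (fds_sum X Y).
Proof.
case=> g hK gK [g' hK' gK'].
exists (fun s => match s with inl x => inl (g x) | inr y => inr (g' y) end);
  by case=> x /=; rewrite ?hK ?hK' ?gK ?gK'.
Qed.

Lemma fds_iso_has_fixpoint {X Y} :
  fds_iso X Y -> has_fixpoint X -> has_fixpoint Y.
Proof. by case=> h [_ hC] [x fx]; exists (h x); rewrite -hC fx. Qed.

Lemma ordS_neq {n} (i : 'I_n) : 1 < n -> ordS i != i.
Proof.
case: n i => [|[|n]] // i _.
by rewrite -(add_Zp_1 (p := n.+2)) -{2}[i]addr0 (inj_eq (addrI i)) oner_eq0.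
Qed.

Lemma ordS_addZp n (i : 'I_n.+1) : ordS i = (i + inZp 1)%R.
Proof. by apply: val_inj; rewrite /= modnDmr addn1. Qed.

Lemma fds_prod_cycle_cycle n :
  fds_iso (fds_prod (cycleFDS n.+1) (cycleFDS n.+1))
          (fds_prod (idFDS n.+1) (cycleFDS n.+1)).
Proof.
pose shear (p : 'I_n.+1 * 'I_n.+1) := (p.2 - p.1, p.2)%R.
apply: (@can2_fds_iso (fds_prod (cycleFDS n.+1) (cycleFDS n.+1))
          (fds_prod (idFDS n.+1) (cycleFDS n.+1)) shear shear).
- by case=> i j; rewrite /shear /= opprB addrC subrK.
- by case=> i j; rewrite /shear /= opprB addrC subrK.
- by case=> i j; rewrite /shear /= !ordS_addZp opprD addrACA subrr addr0.
Qed.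

Lemma fds_prod_cycle_absorb a X : 0 < a ->
  fds_iso (fds_prod (cycleFDS a) (fds_prod (cycleFDS a) X))
          (fds_prod (cycleFDS a) (fds_prod (idFDS a) X)).
Proof.
case: a => // n _.
apply: fds_iso_trans (fds_prodA _ _ _) _.
apply: fds_iso_trans (fds_iso_prod (fds_prod_cycle_cycle n) (fds_iso_refl X)) _.
apply: fds_iso_trans (fds_iso_sym (fds_prodA _ _ _)) _.
exact: fds_prodCA.
Qed.

Fixpoint twin_perms (A : seq nat) : FDS * FDS :=
  if A is a :: A' then
    let P := twin_perms A' in
    (fds_sum (fds_prod (idFDS a) P.1) (fds_prod (cycleFDS a) P.2),
     fds_sum (fds_prod (idFDS a) P.2) (fds_prod (cycleFDS a) P.1))
  else (@mkFDS unit id, @mkFDS void id).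

Lemma perm_twin_perms A :
  is_perm_fds (twin_perms A).1 /\ is_perm_fds (twin_perms A).2.
Proof.
elim: A => [|a A [perm1 perm2]] /=; first by split; exists id.
have permI : is_perm_fds (idFDS a) by exists id.
have permC : is_perm_fds (cycleFDS a) by apply: ordS_bij.
by split; apply: perm_fds_sum; apply: perm_fds_prod.
Qed.

Lemma twin_perms1_fixpoint {A} :
  all (fun a => 0 < a) A -> has_fixpoint (twin_perms A).1.
Proof.
elim: A => [|a A IH] /=; first by exists tt.
case/andP=> a_gt0 /IH[x fx].
by exists (inl (Ordinal a_gt0, x)); rewrite /= fx.
Qed.

Lemma twin_perms2_fixpoint_free {A} :
  all (fun a => 1 < a) A -> fixpoint_free (twin_perms A).2.
Proof.
elim: A => [|a A IH] /=; first by move=> _ [].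
case/andP=> a_gt1 /IH fixfree2.
case=> -[i x]; apply/eqP=> -[].
- exact/eqP/fixfree2.
- by move=> /eqP; rewrite (negbTE (ordS_neq i a_gt1)).
Qed.

Lemma twin_perms_cycle_iso {A b} : all (fun a => 0 < a) A -> b \in A ->
  fds_iso (fds_prod (cycleFDS b) (twin_perms A).1)
          (fds_prod (cycleFDS b) (twin_perms A).2).
Proof.
elim: A => [|a A IH] //= /andP[a_gt0 A_gt0] b_aA.
apply: fds_iso_trans (fds_prodDr _ _ _) _.
apply: fds_iso_trans (fds_iso_sym (fds_prodDr _ _ _)).
case/predU1P: b_aA => [-> | bA].
- apply: fds_iso_trans (fds_sumC _ _).
  apply: fds_iso_sum; last exact: fds_prod_cycle_absorb.
  exact: fds_iso_sym (fds_prod_cycle_absorb _ _ a_gt0).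
- have iso_inner W : fds_iso
      (fds_prod (cycleFDS b) (fds_prod W (twin_perms A).1))
      (fds_prod (cycleFDS b) (fds_prod W (twin_perms A).2)).
    apply: fds_iso_trans (fds_prodCA _ _ _) _.
    apply: fds_iso_trans (fds_prodCA _ _ _).
    exact: fds_iso_prod (fds_iso_refl W) (IH A_gt0 bA).
  by apply: fds_iso_sum; last apply: fds_iso_sym; apply: iso_inner.
Qed.

Theorem mainTheorem15 (A : seq nat) :
  (forall a, a \in A -> 1 < a) ->
  exists X X' : FDS,
    [/\ is_perm_fds X, is_perm_fds X', ~ fds_iso X X' &
        forall a, a \in A -> fds_iso (fds_prod (cycleFDS a) X) (fds_prod (cycleFDS a) X')].
Proof.
move=> A_gt1; have A_gt1' : all (fun a => 1 < a) A by apply/allP.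
have A_gt0 : all (fun a => 0 < a) A by apply/allP=> a /A_gt1/ltnW.
have [perm1 perm2] := perm_twin_perms A.
exists (twin_perms A).1, (twin_perms A).2; split=> // [iso12 | a aA].
- have [x fx] := fds_iso_has_fixpoint iso12 (twin_perms1_fixpoint A_gt0).
  by have /eqP := twin_perms2_fixpoint_free A_gt1' x.
- exact: twin_perms_cycle_iso.
Qed.
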